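(* Let $A$ be an integral domain with field of fractions $K$, let $\mathcal P$ be a set of prime ideals of $A$, and let $B=\bigcap_{P\in\mathcal P}A_P$. The following are equivalent: (1) $B$ is a localization of $A$; (2) for every $x\in K\setminus A$ with $(A:_A x)\subseteq\bigcup_{P\in\mathcal P}P$, there is $P\in\mathcal P$ with $(A:_A x)\subseteq P$. Moreover, if each principal ideal of $A$ has only finitely many associated primes, then these are also equivalent to: (3) if $Q$ is an associated prime of a principal ideal of $A$ with $Q\subseteq\bigcup_{P\in\mathcal P}P$, then $Q\subseteq P$ for some $P\in\mathcal P$.
   Context: $(A:_A x)=\{a\in A: ax\in A\}$. An overring $B$ of $A$ is a localization of $A$ if $B=S^{-1}A$ for a multiplicatively closed set $S$ of nonzero elements of $A$. A prime $P$ of $A$ is an associated prime of an ideal $I$ if there is $a\in A$ such that $P$ is a minimal prime over $(I:_A a)=\{r\in A: ra\in I\}$. *)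

From HB Require Import structures.
From mathcomp Require Import all_boot all_order all_algebra.
From mathcomp Require Import boolp classical_sets cardinality.
Set Implicit Arguments. Unset Strict Implicit. Unset Printing Implicit Defensive.
Import GRing.Theory.
Local Open Scope ring_scope.
Local Open Scope classical_set_scope.

(* The integral domain A is represented as a subring of its field of
   fractions K (A : set K). *)
Section Defs.
Variable K : fieldType.

Definition subring (A : set K) : Prop :=
  A 1 /\ (forall x y, A x -> A y -> A (x - y)) /\
  (forall x y, A x -> A y -> A (x * y)).

Definition is_frac_field (A : set K) : Prop :=
  forall x, exists a b, [/\ A a, A b, b != 0 & x = a / b].

Definition ideal_of (A I : set K) : Prop :=
  [/\ I `<=` A, I 0, (forall x y, I x -> I y -> I (x + y))
    & (forall a x, A a -> I x -> I (a * x))].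

Definition prime_ideal (A P : set K) : Prop :=
  [/\ ideal_of A P, ~ P 1
    & (forall a b, A a -> A b -> P (a * b) -> P a \/ P b)].

Definition loc_at (A P : set K) : set K :=
  [set x | exists a s, [/\ A a, A s, ~ P s & x = a / s]].

Definition loc_by (A S : set K) : set K :=
  [set x | exists a s, [/\ A a, S s & x = a / s]].

Definition mult_closed_nonzero (A S : set K) : Prop :=
  [/\ S `<=` A, (forall s, S s -> s != 0), S 1
    & (forall s t, S s -> S t -> S (s * t))].

Definition is_localization (A B : set K) : Prop :=
  exists S, mult_closed_nonzero A S /\ B = loc_by A S.

Definition conductor (A : set K) (x : K) : set K :=
  [set a | A a /\ A (a * x)].

Definition colon_ideal (A I : set K) (a : K) : set K :=
  [set r | A r /\ I (r * a)].

Definition minimal_prime_over (A J P : set K) : Prop :=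
  [/\ prime_ideal A P, J `<=` P
    & (forall Q, prime_ideal A Q -> J `<=` Q -> Q `<=` P -> P `<=` Q)].

Definition assoc_prime (A I P : set K) : Prop :=
  exists a, A a /\ minimal_prime_over A (colon_ideal A I a) P.

Definition principal_ideal (A : set K) (a : K) : set K :=
  [set a * r | r in A].

End Defs.

(* An element x of K lies in A_P iff its conductor (A :_A x) is not contained
   in P.  Hence, for S the nonzero elements of A outside U := \bigcup_(P in PP) P,
   S^-1 A <= B, an x in B lies in S^-1 A iff (A :_A x) is not contained in U, and
   a localization equal to B has no denominator in U (its inverse would lie in
   B).  So B is a localization iff B = S^-1 A iff (2).
   (3) -> (2): for x = n / d, a prime inside U containing (A :_A x) exists by
   Krull's lemma, and it contains a minimal prime over (A :_A x) = (dA :_A n),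
   which is an associated prime of dA.
   (2) -> (3): let Q be minimal over (A :_A x) = (aA :_A b) and pick s outside Q
   but inside every associated prime of aA not contained in Q.  A prime Q'
   containing s and minimal over (A :_A s^n x) misses some u with u s^k in that
   ideal, i.e. u in (A :_A s^(n+k) x); as these conductors increase, Q' is not
   minimal over (A :_A s^m x) for large m.  By finiteness, for some N every
   associated prime of aA minimal over (A :_A s^N x) lies in Q.  Since
   (A :_A s^N x) <= Q <= U, (2) gives P in PP containing (A :_A s^N x), hence a
   minimal prime Q' over it inside P; Q' is an associated prime of aA, so
   (A :_A x) <= Q' <= Q and Q = Q' <= P. *)

From HB Require Import structures.
From mathcomp Require Import all_boot all_order all_algebra.
From mathcomp Require Import boolp classical_sets cardinality filter.
From mathcomp Require Import ring.
Set Implicit Arguments. Unset Strict Implicit. Unset Printing Implicit Defensive.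
Import GRing.Theory.
Local Open Scope ring_scope.
Local Open Scope classical_set_scope.

Lemma Zorn_bigcup_nonempty T (P : set (set T)) (X0 : set T) : P X0 ->
    (forall F, F `<=` P -> F !=set0 -> total_on F subset ->
      P (\bigcup_(X in F) X)) ->
  exists M, P M /\ forall X, M `<` X -> ~ P X.
Proof.
move=> PX0 chainP; pose P0 := P `|` [set set0].
have [M [P0M Mmax]] : exists M, P0 M /\ forall X, M `<` X -> ~ P0 X.
  apply: Zorn_bigcup => F FP0 Ftot.
  have [[X [FX [x Xx]]]|none] := pselect (exists X, F X /\ X !=set0); last first.
    right; apply/bigcup0 => X FX; apply/nonemptyPn => XN.
    exact: none (ex_intro _ X (conj FX XN)).
  pose F' := F `&` [set X | X !=set0].
  have -> : \bigcup_(X in F) X = \bigcup_(X in F') X.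
    apply/seteqP; split=> [y [Y FY Yy]|y [Y [FY _] Yy]]; last by exists Y.
    by exists Y => //; split=> //; exists y.
  left; apply: chainP; last by move=> Y Z [FY _] [FZ _]; exact: Ftot.
  - move=> Y [/FP0[//|->] [y]] //.
  - by exists X; split=> //; exists x.
have maxP X : M `<` X -> ~ P X by move=> MX PX; apply: (Mmax X MX); left.
case: P0M => [PM|M0]; first by exists M.
have [[x X0x]|/nonemptyPn X00] := pselect (X0 !=set0); last first.
  by exists M; split=> //; rewrite M0 -X00.
exfalso; apply: (maxP X0) => //; rewrite M0; split=> // /(_ x X0x) [].
Qed.

Lemma Zorn_bigcap_nonempty T (P : set (set T)) (X0 : set T) : P X0 ->
    (forall F, F `<=` P -> F !=set0 -> total_on F subset ->
      P (\bigcap_(X in F) X)) ->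
  exists M, P M /\ forall X, X `<` M -> ~ P X.
Proof.
move=> PX0 chainP.
have [C [PC Cmax]] : exists C, P (~` C) /\ forall X, C `<` X -> ~ P (~` X).
  apply: (@Zorn_bigcup_nonempty _ [set C | P (~` C)] (~` X0)).
    by rewrite /= setCK.
  move=> F FP [C FC] Ftot; rewrite /= setC_bigcup.
  have -> : \bigcap_(D in F) ~` D = \bigcap_(X in setC @` F) X by rewrite bigcap_image.
  apply: chainP; first by move=> _ [D FD <-]; exact: FP.
    by exists (~` C), C.
  move=> _ _ [D FD <-] [E FE <-].
  by case: (Ftot D E) => // ?; [right|left]; exact: subsetC.
exists (~` C); split=> // X [XC nCX] PX; apply: (Cmax (~` X)); last by rewrite setCK.
by split; [rewrite -setCS setCK|move=> /subsetC; rewrite setCK].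
Qed.

Section Subring.
Variables (K : fieldType) (A : set K).
Hypothesis hA : subring A.

Lemma subring1 : A 1. Proof. by case: hA. Qed.

Lemma subringB x y : A x -> A y -> A (x - y).
Proof. by case: hA => _ [+ _]; apply. Qed.

Lemma subringM x y : A x -> A y -> A (x * y).
Proof. by case: hA => _ [_]; apply. Qed.

Lemma subring0 : A 0.
Proof. by rewrite -(subrr 1); apply: subringB; exact: subring1. Qed.

Lemma subringD x y : A x -> A y -> A (x + y).
Proof.
move=> Ax Ay; rewrite -[y]opprK -[- y]sub0r.
by apply: subringB => //; apply: subringB => //; exact: subring0.
Qed.

Lemma subringX x n : A x -> A (x ^+ n).
Proof.
move=> Ax; elim: n => [|n IHn]; first by rewrite expr0; exact: subring1.
by rewrite exprS; exact: subringM.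
Qed.

Section Ideal.
Variable I : set K.
Hypothesis hI : ideal_of A I.

Lemma ideal_sub : I `<=` A. Proof. by case: hI. Qed.
Lemma ideal0 : I 0. Proof. by case: hI. Qed.
Lemma idealD x y : I x -> I y -> I (x + y). Proof. by case: hI => _ _ + _; apply. Qed.
Lemma idealMl a x : A a -> I x -> I (a * x). Proof. by case: hI => _ _ _; apply. Qed.
Lemma idealMr a x : I x -> A a -> I (x * a).
Proof. by move=> Ix Aa; rewrite mulrC; exact: idealMl. Qed.

End Ideal.

Section PrimeIdeal.
Variable P : set K.
Hypothesis hP : prime_ideal A P.

Lemma prime_ideal_ideal : ideal_of A P. Proof. by case: hP. Qed.
Lemma prime_ideal_not1 : ~ P 1. Proof. by case: hP. Qed.

Lemma prime_idealM a b : A a -> A b -> P (a * b) -> P a \/ P b.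
Proof. by case: hP => _ _; apply. Qed.

Lemma prime_ideal_notM a b : A a -> A b -> ~ P a -> ~ P b -> ~ P (a * b).
Proof. by move=> Aa Ab nPa nPb /(prime_idealM Aa Ab) []. Qed.

Lemma prime_ideal_notX s n : A s -> ~ P s -> ~ P (s ^+ n).
Proof.
move=> As nPs; elim: n => [|n IHn]; first by rewrite expr0; exact: prime_ideal_not1.
by rewrite exprS; apply: prime_ideal_notM => //; exact: subringX.
Qed.

Lemma prime_ideal_neq0 s : ~ P s -> s != 0.
Proof. by apply: contra_notN => /eqP ->; exact: ideal0 prime_ideal_ideal. Qed.

End PrimeIdeal.

Lemma prime_ideal0 : prime_ideal A [set 0].
Proof.
split; [split|..] => //.
- by move=> _ ->; exact: subring0.
- by move=> _ _ -> ->; rewrite addr0.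
- by move=> a _ _ ->; rewrite mulr0.
- by move/eqP; rewrite oner_eq0.
- by move=> a b _ _ /eqP; rewrite mulf_eq0 => /orP[] /eqP; [left|right].
Qed.

Definition multiplicative (T : set K) :=
  [/\ T `<=` A, T 1 & forall s t, T s -> T t -> T (s * t)].

Lemma multiplicative_notin_bigcup (F : set (set K)) :
  (forall P, F P -> prime_ideal A P) ->
  multiplicative [set s | A s /\ ~ (\bigcup_(P in F) P) s].
Proof.
move=> Fprime; split.
- by move=> s [].
- by split; [exact: subring1|case=> P /Fprime /prime_ideal_not1].
- move=> s t [As nUs] [At nUt]; split; first exact: subringM.
  case=> P FP; apply: (prime_ideal_notM (Fprime P FP) As At).
  + by move=> Ps; apply: nUs; exists P.
  + by move=> Pt; apply: nUt; exists P.
Qed.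

Lemma ideal_bigcup_chain (F : set (set K)) :
  (forall I, F I -> ideal_of A I) -> F !=set0 -> total_on F subset ->
  ideal_of A (\bigcup_(I in F) I).
Proof.
move=> Fideal [I0 FI0] Ftot; split.
- by move=> x [I /Fideal/ideal_sub]; apply.
- by exists I0 => //; exact: ideal0 (Fideal I0 FI0).
- move=> x y [I FI Ix] [J FJ Jy].
  have [IJ|JI] := Ftot I J FI FJ.
  + by exists J => //; apply: (idealD (Fideal J FJ)) => //; exact: IJ.
  + by exists I => //; apply: (idealD (Fideal I FI)) => //; exact: JI.
- by move=> a x Aa [I FI Ix]; exists I => //; exact: (idealMl (Fideal I FI)).
Qed.

Lemma prime_ideal_bigcap_chain (F : set (set K)) :
  (forall P, F P -> prime_ideal A P) -> F !=set0 -> total_on F subset ->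
  prime_ideal A (\bigcap_(P in F) P).
Proof.
move=> Fprime [P0 FP0] Ftot; have Fideal P FP := prime_ideal_ideal (Fprime P FP).
split; [split|..].
- by move=> x /(_ P0 FP0); exact: ideal_sub (Fideal P0 FP0) x.
- by move=> P FP; exact: ideal0 (Fideal P FP).
- by move=> x y Fx Fy P FP; apply: (idealD (Fideal P FP)); [exact: Fx|exact: Fy].
- by move=> a x Aa Fx P FP; apply: (idealMl (Fideal P FP)) => //; exact: Fx.
- by move/(_ P0 FP0); exact: prime_ideal_not1 (Fprime P0 FP0).
move=> a b Aa Ab Fab; apply: contrapT => /not_orP[].
move=> /existsNP[P /not_implyP[FP nPa]] /existsNP[Q /not_implyP[FQ nQb]].
have [PQ|QP] := Ftot P Q FP FQ.
- have [/PQ //|] := prime_idealM (Fprime P FP) Aa Ab (Fab P FP).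
  by move=> Pb; apply: nQb; exact: PQ.
- have [|//] := prime_idealM (Fprime Q FQ) Aa Ab (Fab Q FQ).
  by move=> Qa; apply: nPa; exact: QP.
Qed.

Definition ideal_adjoin (I : set K) (c : K) := [set m + c * r | m in I & r in A].

Section IdealAdjoin.
Variables (I : set K) (c : K).
Hypotheses (hI : ideal_of A I) (Ac : A c).

Lemma ideal_adjoin_ideal : ideal_of A (ideal_adjoin I c).
Proof.
split.
- move=> _ [m Im [r Ar <-]]; apply: subringD; first exact: ideal_sub hI m Im.
  exact: subringM.
- by exists 0; [exact: ideal0|exists 0; [exact: subring0|rewrite mulr0 addr0]].
- move=> _ _ [m Im [r Ar <-]] [m' Im' [r' Ar' <-]].
  exists (m + m'); first exact: idealD.
  by exists (r + r'); [exact: subringD|ring].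
- move=> a _ Aa [m Im [r Ar <-]]; exists (a * m); first exact: idealMl.
  by exists (a * r); [exact: subringM|ring].
Qed.

Lemma ideal_adjoin_sub : I `<=` ideal_adjoin I c.
Proof.
by move=> m Im; exists m => //; exists 0; [exact: subring0|rewrite mulr0 addr0].
Qed.

Lemma ideal_adjoin_elt : ideal_adjoin I c c.
Proof.
by exists 0; [exact: ideal0|exists 1; [exact: subring1|rewrite add0r mulr1]].
Qed.

End IdealAdjoin.

Lemma prime_ideal_of_max_avoiding (M T : set K) :
  multiplicative T -> ideal_of A M -> M `<=` ~` T ->
  (forall c, A c -> ~ M c -> ~ (ideal_adjoin M c `<=` ~` T)) ->
  prime_ideal A M.
Proof.
move=> [TA T1 TM] hM MT Mmax; split=> //; first by move/MT.
move=> a b Aa Ab Mab; apply: contrapT => /not_orP[nMa nMb].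
have meetT c : A c -> ~ M c -> exists m r, [/\ M m, A r & T (m + c * r)].
  move=> Ac nMc; apply: contrapT => none; apply: (Mmax c Ac nMc).
  by move=> _ [m Mm [r Ar <-]] Tt; apply: none; exists m, r.
have [m [r [Mm Ar Ta]]] := meetT a Aa nMa.
have [m' [r' [Mm' Ar' Tb]]] := meetT b Ab nMb.
apply: (MT _ _ (TM _ _ Ta Tb)).
have -> : (m + a * r) * (m' + b * r') =
    (m' + b * r') * m + (a * r) * m' + (r * r') * (a * b) by ring.
apply: (idealD hM); first apply: (idealD hM).
- exact: (idealMl hM (TA _ Tb) Mm).
- exact: (idealMl hM (subringM Aa Ar) Mm').
- exact: (idealMl hM (subringM Ar Ar') Mab).
Qed.

Lemma exists_prime_ideal_avoiding (I T : set K) :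
  multiplicative T -> ideal_of A I -> I `<=` ~` T ->
  exists M, [/\ prime_ideal A M, I `<=` M & M `<=` ~` T].
Proof.
move=> Tmult hI IT.
pose avoiding := [set J | [/\ ideal_of A J, I `<=` J & J `<=` ~` T]].
have [M [[hM IM MT] Mmax]] : exists M, avoiding M /\ forall J, M `<` J -> ~ avoiding J.
  apply: (Zorn_bigcup_nonempty (X0 := I)); first by split.
  move=> F Favoid [J0 FJ0] Ftot; split.
  - by apply: ideal_bigcup_chain => [J /Favoid[]| |] //; exists J0.
  - by apply: subset_trans (bigcup_sup FJ0); case: (Favoid J0 FJ0).
  - by apply: bigcup_sub => J /Favoid[].
exists M; split=> //; apply: (prime_ideal_of_max_avoiding Tmult) => // c Ac nMc adjT.
apply: (Mmax (ideal_adjoin M c)); last first.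
  split=> //; first exact: ideal_adjoin_ideal.
  exact: subset_trans IM (@ideal_adjoin_sub _ c).
split; first exact: ideal_adjoin_sub.
by move=> /(_ c (ideal_adjoin_elt c hM)).
Qed.

Lemma exists_minimal_prime_over (I P : set K) :
  I `<=` P -> prime_ideal A P ->
  exists Q, minimal_prime_over A I Q /\ Q `<=` P.
Proof.
move=> IP hP.
pose between := [set Q | [/\ prime_ideal A Q, I `<=` Q & Q `<=` P]].
have [Q [[hQ IQ QP] Qmin]] : exists Q, between Q /\ forall J, J `<` Q -> ~ between J.
  apply: (Zorn_bigcap_nonempty (X0 := P)); first by split.
  move=> F Fbetween [Q0 FQ0] Ftot; split.
  - by apply: prime_ideal_bigcap_chain => [Q /Fbetween[]| |] //; exists Q0.
  - by apply: sub_bigcap => Q /Fbetween[].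
  - by apply: subset_trans (bigcap_inf FQ0) _; case: (Fbetween Q0 FQ0).
exists Q; split=> //; split=> // J hJ IJ JQ; apply: contrapT => nQJ.
by apply: (Qmin J); split=> //; exact: subset_trans JQ QP.
Qed.

Lemma minimal_prime_over_witness (J Q : set K) q :
  ideal_of A J -> minimal_prime_over A J Q -> Q q ->
  exists u k, [/\ A u, ~ Q u & J (u * q ^+ k)].
Proof.
move=> hJ [hQ JQ Qmin] Qq; have Aq := ideal_sub (prime_ideal_ideal hQ) Qq.
apply: contrapT => none.
pose T := [set t | exists u k, [/\ A u, ~ Q u & t = u * q ^+ k]].
have Tmult : multiplicative T.
  split.
  - by move=> _ [u [k [Au _ ->]]]; exact: subringM Au (subringX k Aq).
  - by exists 1, 0%N; split; [exact: subring1|exact: prime_ideal_not1|rewrite mulr1].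
  - move=> _ _ [u [k [Au nQu ->]]] [v [l [Av nQv ->]]].
    exists (u * v), (k + l)%N; split; first exact: subringM.
    + exact: prime_ideal_notM.
    + by rewrite exprD; ring.
have [|M [hM JM MT]] := exists_prime_ideal_avoiding Tmult hJ.
  by move=> t Jt [u [k [Au nQu tE]]]; apply: none; exists u, k; rewrite -tE.
have MQ : M `<=` Q.
  move=> m Mm; apply: contrapT => nQm; apply: (MT m Mm).
  exists m, 0%N; split=> //; last by rewrite mulr1.
  exact: ideal_sub (prime_ideal_ideal hM) m Mm.
apply: (MT q (Qmin M hM JM MQ q Qq)).
by exists 1, 1%N; split; [exact: subring1|exact: prime_ideal_not1|rewrite mul1r].
Qed.

Lemma conductor_ideal x : ideal_of A (conductor A x).
Proof.
split.
- by move=> r [].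
- by split; rewrite ?mul0r; exact: subring0.
- move=> r t [Ar Arx] [At Atx]; split; first exact: subringD.
  by rewrite mulrDl; exact: subringD.
- move=> c r Ac [Ar Arx]; split; first exact: subringM.
  by rewrite -mulrA; exact: subringM.
Qed.

Lemma conductor_subM c x : A c -> conductor A x `<=` conductor A (c * x).
Proof. by move=> Ac r [Ar Arx]; split=> //; rewrite mulrCA; exact: subringM. Qed.

Lemma conductorM_sub_prime (Q : set K) c x :
  prime_ideal A Q -> A c -> ~ Q c ->
  conductor A x `<=` Q -> conductor A (c * x) `<=` Q.
Proof.
move=> hQ Ac nQc xQ r [Ar Arcx].
have /(prime_idealM hQ Ar Ac) [//|//] : Q (r * c).
by apply: xQ; split; [exact: subringM|rewrite -mulrA].
Qed.

Lemma loc_atP (P : set K) x : prime_ideal A P ->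
  loc_at A P x <-> exists2 t, conductor A x t & ~ P t.
Proof.
move=> hP; split=> [[a [s [Aa As nPs ->]]]|[t [At Atx] nPt]].
  by exists s => //; split=> //; rewrite mulrC divfK // (prime_ideal_neq0 hP).
by exists (t * x), t; split=> //; rewrite [t * x]mulrC mulfK // (prime_ideal_neq0 hP).
Qed.

Lemma colon_principal a b : a != 0 ->
  colon_ideal A (principal_ideal A a) b = conductor A (b / a).
Proof.
move=> a_neq0; apply/seteqP; split=> r [Ar rb]; split=> //.
  by case: rb => r' Ar' rE; rewrite mulrA -rE mulrC mulKf.
exists (r * (b / a)) => //.
by rewrite mulrCA; congr (_ * _); rewrite mulrCA mulfV // mulr1.
Qed.

Lemma assoc_prime_prime (I Q : set K) : assoc_prime A I Q -> prime_ideal A Q.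
Proof. by case=> a [_ []]. Qed.

Lemma assoc_prime_principal0 (Q : set K) :
  assoc_prime A (principal_ideal A 0) Q -> Q `<=` [set 0].
Proof.
move=> [b [Ab [hQ JQ Qmin]]].
have [b0|b_neq0] := eqVneq b 0.
  exfalso; apply: (prime_ideal_not1 hQ); apply: JQ; split; first exact: subring1.
  by exists 0; [exact: subring0|rewrite b0 !mulr0].
apply: Qmin; first exact: prime_ideal0.
  move=> r [_ [r' _ /esym/eqP]]; rewrite mul0r mulf_eq0 (negbTE b_neq0) orbF.
  by move/eqP.
by move=> _ ->; exact: ideal0 (prime_ideal_ideal hQ).
Qed.

Lemma exists_in_meet_notin_prime (Q : set K) (F : set (set K)) :
  prime_ideal A Q -> finite_set F -> (forall P, F P -> prime_ideal A P) ->
  exists s, [/\ A s, ~ Q s & forall P, F P -> ~ P `<=` Q -> P s].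
Proof.
move=> hQ /finite_fsetP[X ->].
suff : forall l : seq (set K), (forall P, P \in l -> prime_ideal A P) -> exists s,
    [/\ A s, ~ Q s & forall P, P \in l -> ~ P `<=` Q -> P s].
  by apply.
elim=> [|P l IHl] lprime.
  by exists 1; split=> //; [exact: subring1|exact: prime_ideal_not1].
have [s [As nQs sl]] :
    exists s, [/\ A s, ~ Q s & forall P, P \in l -> ~ P `<=` Q -> P s].
  by apply: IHl => P' P'l; apply: lprime; rewrite in_cons P'l orbT.
have hP := lprime P (mem_head P l).
have [PQ|/existsNP[u /not_implyP[Pu nQu]]] := pselect (P `<=` Q).
  by exists s; split=> // P'; rewrite in_cons => /orP[/eqP->|] //; exact: sl.
have Au := ideal_sub (prime_ideal_ideal hP) Pu.
exists (s * u); split; [exact: subringM|exact: prime_ideal_notM|].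
move=> P'; rewrite in_cons => /orP[/eqP-> _|P'l P'Q].
  exact: (idealMl (prime_ideal_ideal hP) As Pu).
have hP' : prime_ideal A P' by apply: lprime; rewrite in_cons P'l orbT.
exact: (idealMr (prime_ideal_ideal hP') (sl P' P'l P'Q) Au).
Qed.

Lemma minimal_prime_over_conductor_eventually (Q : set K) s x : A s -> Q s ->
  \forall m \near \oo, ~ minimal_prime_over A (conductor A (s ^+ m * x)) Q.
Proof.
move=> As Qs.
have [[n minQ]|none] := pselect (exists n,
    minimal_prime_over A (conductor A (s ^+ n * x)) Q); last first.
  by exists 0%N => // m _ minQ; apply: none; exists m.
have [u [k [Au nQu [_ Auk]]]] := minimal_prime_over_witness (conductor_ideal _) minQ Qs.
exists (n + k)%N => // m /= le_nk_m [_ cQ _]; apply/nQu/cQ.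
rewrite -(subnK le_nk_m) exprD -mulrA; apply: conductor_subM; first exact: subringX.
split=> //; suff -> : u * (s ^+ (n + k) * x) = u * s ^+ k * (s ^+ n * x) by [].
by rewrite exprD; ring.
Qed.

Lemma minimal_primes_over_conductor_eventually_below (F : set (set K)) (Q : set K) s x :
  A s -> finite_set F -> (forall P, F P -> ~ P `<=` Q -> P s) ->
  exists N, forall P, F P ->
    minimal_prime_over A (conductor A (s ^+ N * x)) P -> P `<=` Q.
Proof.
move=> As /finite_fsetP[X FX] Fs.
pose below P := [set m | minimal_prime_over A (conductor A (s ^+ m * x)) P -> P `<=` Q].
have below_eventually P : F P -> \oo (below P).
  move=> FP; have [PQ|nPQ] := pselect (P `<=` Q); first by exists 0%N => // m _ _.
  apply: filterS (minimal_prime_over_conductor_eventually x As (Fs P FP nPQ)).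
  by move=> m nmin /nmin.
rewrite FX in below_eventually.
have [N _ /(_ N (leqnn N)) belowN] := filter_bigI eventually_filter below_eventually.
by exists N; rewrite FX.
Qed.

End Subring.

Section Overring.
Variables (K : fieldType) (A : set K) (PP : set (set K)).
Hypotheses (hA : subring A) (hPP : forall P, PP P -> prime_ideal A P).

Definition conductor_avoidance :=
  forall x, ~ A x -> conductor A x `<=` \bigcup_(P in PP) P ->
    exists2 P, PP P & conductor A x `<=` P.

Definition assoc_prime_avoidance :=
  forall a Q, A a -> assoc_prime A (principal_ideal A a) Q ->
    Q `<=` \bigcup_(P in PP) P -> exists2 P, PP P & Q `<=` P.

Lemma localization_conductor_avoidance :
  is_localization A (\bigcap_(P in PP) loc_at A P) -> conductor_avoidance.
Proof.
move=> [S [[SA S_neq0 _ _] BS]] x _ xU; apply: contrapT => noP.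
have : (\bigcap_(P in PP) loc_at A P) x.
  move=> P PP_P; apply/(loc_atP _ (hPP PP_P)); apply: contrapT => none.
  apply: noP; exists P => // t xt; apply: contrapT => nPt; apply: none; by exists t.
rewrite BS => -[c [s [Ac Ss xE]]].
have [P PP_P Ps] : (\bigcup_(P in PP) P) s.
  by apply: xU; split; [exact: SA|rewrite xE mulrC divfK // S_neq0].
have : (\bigcap_(P in PP) loc_at A P) (1 / s).
  by rewrite BS; exists 1, s; split=> //; exact: subring1.
move=> /(_ P PP_P) /(loc_atP _ (hPP PP_P)) [t [_ At_s] nPt]; apply: nPt.
have -> : t = t * (1 / s) * s by rewrite mulrA mulr1 divfK // S_neq0.
exact: (idealMl (prime_ideal_ideal (hPP PP_P)) At_s Ps).
Qed.

Lemma conductor_avoidance_localization : is_frac_field A ->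
  conductor_avoidance -> is_localization A (\bigcap_(P in PP) loc_at A P).
Proof.
move=> hF h2; set U := \bigcup_(P in PP) P.
have [_ _ SM] := multiplicative_notin_bigcup hA hPP.
exists [set s | [/\ A s, s != 0 & ~ U s]]; split.
  split.
  - by move=> s [].
  - by move=> s [].
  - by split; [exact: subring1|exact: oner_neq0|case=> P /hPP /prime_ideal_not1].
  - move=> s t [As s_neq0 nUs] [At t_neq0 nUt].
    have [Ast nUst] := SM s t (conj As nUs) (conj At nUt).
    by split=> //; rewrite mulf_neq0.
apply/seteqP; split=> [x Bx|_ [a [s [Aa [As _ nUs] ->]]] P PP_P]; last first.
  by exists a, s; split=> // Ps; apply: nUs; exists P.
suff [s [[As Asx] s_neq0 nUs]] : exists s, [/\ conductor A x s, s != 0 & ~ U s].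
  by exists (s * x), s; split=> //; rewrite [s * x]mulrC mulfK.
have [[P0 PP_P0]|noPP] := pselect (PP !=set0); last first.
  (* with PP empty, B is all of K *)
  have [a [b [Aa Ab b_neq0 ->]]] := hF x.
  exists b; split=> //; first by split=> //; rewrite mulrC divfK.
  by case=> P PP_P _; apply: noPP; exists P.
have : ~ (conductor A x `<=` U).
  move=> xU; have [Ax|nAx] := pselect (A x).
    have x1 : conductor A x 1 by split; [exact: subring1|rewrite mul1r].
    by have [P /hPP /prime_ideal_not1] := xU 1 x1.
  have [P PP_P xP] := h2 x nAx xU.
  by have [t /xP] := (loc_atP _ (hPP PP_P)).1 (Bx P PP_P).
move=> /existsNP[s /not_implyP[xs nUs]]; exists s; split=> //.
by apply: (prime_ideal_neq0 (hPP PP_P0)) => P0s; apply: nUs; exists P0.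
Qed.

Lemma assoc_prime_avoidance_conductor :
  is_frac_field A -> assoc_prime_avoidance -> conductor_avoidance.
Proof.
move=> hF h3 x _ xU; set U := \bigcup_(P in PP) P.
have [n [d [An Ad d_neq0 xE]]] := hF x.
have [|M [hM xM MT]] := exists_prime_ideal_avoiding hA
    (multiplicative_notin_bigcup hA hPP) (conductor_ideal hA x).
  by move=> r xr [_]; apply; exact: xU.
have MU : M `<=` U.
  move=> m Mm; apply: contrapT => nUm; apply: (MT m Mm); split=> //.
  exact: ideal_sub (prime_ideal_ideal hM) m Mm.
have [Q [minQ QM]] := exists_minimal_prime_over xM hM.
have assocQ : assoc_prime A (principal_ideal A d) Q.
  by exists n; split=> //; rewrite colon_principal // -xE.
have [P PP_P QP] := h3 d Q Ad assocQ (subset_trans QM MU).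
by exists P => //; case: minQ => _ xQ _; exact: subset_trans xQ QP.
Qed.

Lemma conductor_avoidance_assoc_prime :
  (forall a, A a -> finite_set (assoc_prime A (principal_ideal A a))) ->
  conductor_avoidance -> assoc_prime_avoidance.
Proof.
move=> hfin h2 a Q Aa assocQ QU.
have hQ := assoc_prime_prime assocQ.
have [a0|a_neq0] := eqVneq a 0.
  have Q0 : Q `<=` [set 0] by apply: (assoc_prime_principal0 hA); rewrite -a0.
  have [P PP_P P0] := QU 0 (ideal0 (prime_ideal_ideal hQ)).
  by exists P => // _ /Q0 ->.
have [b [Ab]] := assocQ; rewrite colon_principal // => -[_ xQ Qmin].
set x := b / a in xQ Qmin.
have [s [As nQs sQ']] :=
  exists_in_meet_notin_prime hA hQ (hfin a Aa) (fun _ h => assoc_prime_prime h).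
have [N belowN] :=
  minimal_primes_over_conductor_eventually_below hA x As (hfin a Aa) sQ'.
have AsN := subringX hA N As.
have yQ : conductor A (s ^+ N * x) `<=` Q.
  by apply: (conductorM_sub_prime hA hQ AsN) xQ; exact: (prime_ideal_notX hA hQ As nQs).
have nAy : ~ A (s ^+ N * x).
  move=> Ay; apply: (prime_ideal_not1 hQ); apply: yQ.
  by split; [exact: subring1|rewrite mul1r].
have [P PP_P yP] := h2 _ nAy (subset_trans yQ QU).
have [Q' [minQ' Q'P]] := exists_minimal_prime_over yP (hPP PP_P).
have assocQ' : assoc_prime A (principal_ideal A a) Q'.
  exists (s ^+ N * b); split; first exact: subringM.
  by rewrite colon_principal // -mulrA.
have [hQ' yQ' _] := minQ'.
exists P => //; apply: subset_trans Q'P; apply: Qmin hQ' _ (belowN Q' assocQ' minQ').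
exact: subset_trans (conductor_subM hA AsN) yQ'.
Qed.

End Overring.

Theorem theorem2p4 (K : fieldType) (A : set K) (PP : set (set K)) :
  subring A -> is_frac_field A ->
  (forall P, PP P -> prime_ideal A P) ->
  let B := \bigcap_(P in PP) loc_at A P in
  (is_localization A B <->
     (forall x, ~ A x -> conductor A x `<=` \bigcup_(P in PP) P ->
        exists2 P, PP P & conductor A x `<=` P)) /\
  ((forall a, A a -> finite_set (assoc_prime A (principal_ideal A a))) ->
   (is_localization A B <->
     (forall a Q, A a -> assoc_prime A (principal_ideal A a) Q ->
        Q `<=` \bigcup_(P in PP) P -> exists2 P, PP P & Q `<=` P))).
Proof.
move=> hA hF hPP B.
have loc_cond := localization_conductor_avoidance hA hPP.
have cond_loc := conductor_avoidance_localization hA hPP hF.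
split; first by split; [exact: loc_cond|exact: cond_loc].
move=> hfin; split=> [/loc_cond|/(assoc_prime_avoidance_conductor hA hPP hF)//].
exact: conductor_avoidance_assoc_prime hA hPP hfin.
Qed.
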